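(* Let $L,k$ be natural numbers and let $G=(V,E)$ be a simple, undirected, connected graph whose vertex set can be covered by $L$ balls of radius $k$ (i.e. there are $u_1,\dots,u_L\in V$ with every vertex at distance at most $k$ from some $u_j$). Then the cat can localise the mouse up to distance $4L+k$ in $G$ by time $2L$.
   Context: The Cat and Mouse game on $G$ proceeds in time steps $i=1,2,\dots$. The mouse occupies vertices $m_1,m_2,\dots$, where for $i\ge2$, $m_i$ equals $m_{i-1}$ or is a neighbour of $m_{i-1}$. At time $i$ the cat tests an arbitrary vertex $c_i$; for $i\ge2$ it is told $b_i=1$ if $d(c_i,m_i)\le d(c_{i-1},m_{i-1})$ and $b_i=0$ otherwise ($d$ = graph distance). A cat strategy is $(c_1,c_2,f)$ with $f:\bigcup_{i\in\mathbb N}\{0,1\}^i\to V(G)$ and $c_i=f(b_2,\dots,b_{i-1})$ for $i\ge3$ (deterministic, fixed in advance). $M_i$ is the set of vertices $v$ for which there exist $\tilde m_1,\dots,\tilde m_i$ with $\tilde m_i=v$, each $\tilde m_j$ in the closed neighbourhood of $\tilde m_{j-1}$, and for each $2\le j\le i$: $d(c_j,\tilde m_j)\le d(c_{j-1},\tilde m_{j-1})$ iff $b_j=1$. $\mathrm{rad}_G(W)=\min_{v\in V(G)}\max_{w\in W}d(v,w)$. The cat can localise the mouse up to distance $d$ by time $t$ if there is a cat strategy such that, for every admissible mouse sequence, some $i\le t$ satisfies $\mathrm{rad}_G(M_i)\le d$. *)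

From Stdlib Require Import Arith List ClassicalEpsilon.
Import ListNotations.

Section Game.
Context {V : Type} (adj : V -> V -> Prop).

Inductive walk : V -> V -> nat -> Prop :=
| walk0 u : walk u u 0
| walkS u v w n : adj u v -> walk v w n -> walk u w (S n).

Definition connected : Prop := forall u v : V, exists n, walk u v n.

Definition is_dist (u v : V) (n : nat) : Prop :=
  walk u v n /\ forall m, walk u v m -> n <= m.

(* graph distance d(u,v) (well defined = least walk length when G is connected) *)
Definition dist (u v : V) : nat := epsilon (inhabits 0) (fun n => is_dist u v n).

Definition cnbr (u v : V) : Prop := v = u \/ adj u v.

(* Cat strategy (c1, c2, f); mouse sequence m : nat -> V, indexed from 1.
   play n = ([b_2; ...; b_n], c_n) for n >= 1. *)
Fixpoint play (c1 c2 : V) (f : list bool -> V) (m : nat -> V) (n : nat)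
  : list bool * V :=
  match n with
  | 0 => ([], c1)
  | S n' =>
      match n' with
      | 0 => ([], c1)
      | S _ =>
          let '(h, cn') := play c1 c2 f m n' in
          let cn := if Nat.eqb n' 1 then c2 else f h in
          (h ++ [Nat.leb (dist cn (m n)) (dist cn' (m n'))], cn)
      end
  end.

Definition cat (c1 c2 : V) (f : list bool -> V) (m : nat -> V) (i : nat) : V :=
  snd (play c1 c2 f m i).

Definition bit (c1 c2 : V) (f : list bool -> V) (m : nat -> V) (i : nat) : bool :=
  Nat.leb (dist (cat c1 c2 f m i) (m i)) (dist (cat c1 c2 f m (i - 1)) (m (i - 1))).

Definition admissible (m : nat -> V) : Prop :=
  forall i, 2 <= i -> cnbr (m (i - 1)) (m i).

Definition Mset (c1 c2 : V) (f : list bool -> V) (m : nat -> V) (i : nat) (v : V)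
  : Prop :=
  exists mt : nat -> V,
    mt i = v /\
    (forall j, 2 <= j <= i -> cnbr (mt (j - 1)) (mt j)) /\
    (forall j, 2 <= j <= i ->
       (dist (cat c1 c2 f m j) (mt j) <= dist (cat c1 c2 f m (j - 1)) (mt (j - 1))
        <-> bit c1 c2 f m j = true)).

Definition rad_le (W : V -> Prop) (d : nat) : Prop :=
  exists v : V, forall w, W w -> dist v w <= d.

Definition can_localise (d t : nat) : Prop :=
  exists (c1 c2 : V) (f : list bool -> V),
    forall m : nat -> V, admissible m ->
      exists i, 1 <= i <= t /\ rad_le (Mset c1 c2 f m i) d.

End Game.

(* The cat alternates between testing the centres u_0, ..., u_{L-1} (at even times) and a
   current "champion" (at odd times).  At time 2j+2 the bit compares u_j with the champion
   of time 2j+1; if u_j looked at least as close, it becomes the new champion.  A champion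
   loses at most 2 against a fixed centre per round, and the mouse moves twice per round,
   so after round j the champion is within 4j of the distance of every u_l, l <= j, to any
   mouse position consistent with the answers.  At time 2L some u_l is within k of the
   mouse, so the final champion is a centre of radius 4(L-1)+k for M_{2L}. *)
From Stdlib Require Import Arith Lia List Wf_nat Classical ClassicalEpsilon.
Import ListNotations.

Section Distance.
Context {V : Type} (adj : V -> V -> Prop) (Hconn : connected adj).

Lemma walk_snoc x y z n : walk adj x y n -> adj y z -> walk adj x z (S n).
Proof.
  induction 1 as [|u v w n Huv _ IH]; intros Hyz.
  - apply walkS with z; [exact Hyz | constructor].
  - apply walkS with v; auto.
Qed.

Lemma dist_spec x y : is_dist adj x y (dist adj x y).
Proof.
  unfold dist. apply epsilon_spec.
  destruct (dec_inh_nat_subset_has_unique_least_element (walk adj x y))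
    as [n [[Hn Hmin] _]]; [intro; apply classic | apply Hconn |].
  exists n. split; assumption.
Qed.

Lemma dist_cnbr_r x y z : cnbr adj y z -> dist adj x z <= dist adj x y + 1.
Proof.
  intros [-> | Hyz]; [lia |].
  destruct (dist_spec x y) as [Hwalk _].
  destruct (dist_spec x z) as [_ Hmin].
  specialize (Hmin _ (walk_snoc _ _ _ _ Hwalk Hyz)). lia.
Qed.

Lemma dist_cnbr_l (Hsym : forall u v, adj u v -> adj v u) x y z :
  cnbr adj y z -> dist adj x y <= dist adj x z + 1.
Proof.
  intros [-> | Hyz]; [lia |].
  apply dist_cnbr_r. right. auto.
Qed.

(* One round of the champion update: [c] was tested against the mouse at [p1], the
   challenger [u] against the mouse at [p2], and [b] is the answer. *)
Lemma challenge_le c u p1 p2 (b : bool) :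
  (dist adj u p2 <= dist adj c p1 <-> b = true) -> cnbr adj p1 p2 ->
  dist adj (if b then u else c) p2 <= dist adj u p2.
Proof.
  intros Hb Hstep. destruct b; [lia |].
  assert (Hlt : dist adj c p1 < dist adj u p2)
    by (apply Nat.nle_gt; intro Hle; apply Hb in Hle; discriminate).
  pose proof (dist_cnbr_r c _ _ Hstep). lia.
Qed.

Lemma challenge_drift c u p0 p1 p2 (b : bool) :
  (dist adj u p2 <= dist adj c p1 <-> b = true) ->
  cnbr adj p0 p1 -> cnbr adj p1 p2 ->
  dist adj (if b then u else c) p2 <= dist adj c p0 + 2.
Proof.
  intros Hb Hstep01 Hstep12.
  pose proof (dist_cnbr_r c _ _ Hstep01).
  pose proof (dist_cnbr_r c _ _ Hstep12).
  destruct b; [|lia].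
  assert (dist adj u p2 <= dist adj c p1) by (apply Hb; reflexivity). lia.
Qed.

End Distance.

Section Play.
Context {V : Type} (adj : V -> V -> Prop) (c1 c2 : V) (f : list bool -> V) (m : nat -> V).

Definition history (n : nat) : list bool :=
  map (fun t => bit adj c1 c2 f m (t + 2)) (seq 0 n).

Lemma length_history n : length (history n) = n.
Proof. unfold history. rewrite length_map, length_seq. reflexivity. Qed.

Lemma nth_history n t d : t < n -> nth t (history n) d = bit adj c1 c2 f m (t + 2).
Proof.
  intros Ht. unfold history.
  rewrite nth_indep with (d' := (fun t => bit adj c1 c2 f m (t + 2)) 0)
    by (rewrite length_map, length_seq; exact Ht).
  rewrite (map_nth (fun t => bit adj c1 c2 f m (t + 2))), seq_nth by exact Ht.
  reflexivity.
Qed.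

Lemma play_SS n : play adj c1 c2 f m (S (S n)) =
  let '(h, cn') := play adj c1 c2 f m (S n) in
  let cn := if Nat.eqb (S n) 1 then c2 else f h in
  (h ++ [Nat.leb (dist adj cn (m (S (S n)))) (dist adj cn' (m (S n)))], cn).
Proof. reflexivity. Qed.

Lemma fst_play n : fst (play adj c1 c2 f m (S n)) = history n.
Proof.
  induction n as [|n IH]; [reflexivity |].
  unfold history in *. rewrite seq_S, map_app, <- IH. cbn [map].
  unfold bit, cat. replace (0 + n + 2) with (S (S n)) by lia.
  replace (S (S n) - 1) with (S n) by lia.
  rewrite play_SS. destruct (play adj c1 c2 f m (S n)). reflexivity.
Qed.

Lemma cat_history n : cat adj c1 c2 f m (n + 3) = f (history (n + 1)).
Proof.
  replace (n + 3) with (S (S (S n))) by lia. replace (n + 1) with (S n) by lia.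
  unfold cat. rewrite play_SS, <- fst_play.
  destruct (play adj c1 c2 f m (S (S n))). reflexivity.
Qed.

End Play.

(* [b t] is read as the answer b_t, for t >= 2. *)
Fixpoint champion {V : Type} (us : nat -> V) (b : nat -> bool) (j : nat) : V :=
  match j with
  | 0 => us 0
  | S j' => if b (2 * j' + 2) then us j' else champion us b j'
  end.

(* A history of length n is queried at time n + 2. *)
Definition sweep {V : Type} (us : nat -> V) (h : list bool) : V :=
  if Nat.even (length h) then us (Nat.div2 (length h))
  else champion us (fun t => nth (t - 2) h false) (Nat.div2 (S (length h))).

Lemma champion_ext {V : Type} (us : nat -> V) b b' j :
  (forall t, 2 <= t <= 2 * j -> b t = b' t) -> champion us b j = champion us b' j.
Proof.
  induction j as [|j IH]; intros Hbb'; [reflexivity |].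
  cbn [champion]. rewrite (Hbb' (2 * j + 2)) by lia.
  rewrite IH by (intros t Ht; apply Hbb'; lia). reflexivity.
Qed.

Section Sweep.
Context {V : Type} (adj : V -> V -> Prop) (us m : nat -> V).

Local Notation b := (bit adj (us 0) (us 0) (sweep us) m).
Local Notation c := (cat adj (us 0) (us 0) (sweep us) m).

Lemma cat_sweep_even j : c (2 * j + 2) = us j.
Proof.
  destruct j as [|j]; [reflexivity |].
  replace (2 * S j + 2) with (2 * j + 1 + 3) by lia.
  rewrite cat_history. unfold sweep. rewrite length_history.
  replace (2 * j + 1 + 1) with (2 * S j) by lia.
  rewrite Nat.even_even, Nat.div2_double. reflexivity.
Qed.

Lemma cat_sweep_odd j : c (2 * j + 1) = champion us b j.
Proof.
  destruct j as [|j]; [reflexivity |].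
  replace (2 * S j + 1) with (2 * j + 3) by lia.
  rewrite cat_history. unfold sweep. rewrite length_history.
  rewrite Nat.even_odd. replace (S (2 * j + 1)) with (2 * S j) by lia.
  rewrite Nat.div2_double. apply champion_ext.
  intros t Ht. rewrite nth_history by lia. f_equal. lia.
Qed.

Variables (n : nat) (mt : nat -> V).
Hypothesis Hsym : forall u v, adj u v -> adj v u.
Hypothesis Hconn : connected adj.
Hypothesis mt_step : forall t, 2 <= t <= n -> cnbr adj (mt (t - 1)) (mt t).
Hypothesis mt_bits : forall t, 2 <= t <= n ->
  (dist adj (c t) (mt t) <= dist adj (c (t - 1)) (mt (t - 1)) <-> b t = true).

Lemma sweep_round j : 2 * j + 2 <= n ->
  (dist adj (us j) (mt (2 * j + 2)) <= dist adj (champion us b j) (mt (2 * j + 1))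
   <-> b (2 * j + 2) = true).
Proof.
  intros Hj. rewrite <- cat_sweep_even, <- cat_sweep_odd.
  replace (2 * j + 1) with (2 * j + 2 - 1) by lia. apply mt_bits. lia.
Qed.

Lemma champion_near_centres j l : 2 * j + 2 <= n -> l <= j ->
  dist adj (champion us b (S j)) (mt (2 * j + 2)) <= dist adj (us l) (mt (2 * j + 2)) + 4 * j.
Proof.
  induction j as [|j IH]; intros Hj Hl.
  - replace l with 0 by lia. change (2 * 0 + 2) with 2. rewrite Nat.add_0_r.
    exact (challenge_le adj Hconn (us 0) (us 0) (mt 1) (mt 2) _
             (sweep_round 0 Hj) (mt_step 2 ltac:(lia))).
  - pose proof (mt_step (2 * j + 3) ltac:(lia)) as Hstep1.
    pose proof (mt_step (2 * j + 4) ltac:(lia)) as Hstep2.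
    pose proof (sweep_round (S j) ltac:(lia)) as Hround.
    change (champion us b (S (S j))) with
      (if b (2 * S j + 2) then us (S j) else champion us b (S j)).
    replace (2 * j + 3 - 1) with (2 * j + 2) in Hstep1 by lia.
    replace (2 * j + 4 - 1) with (2 * j + 3) in Hstep2 by lia.
    replace (2 * S j + 1) with (2 * j + 3) in Hround by lia.
    replace (2 * S j + 2) with (2 * j + 4) in * by lia.
    destruct (Nat.eq_dec l (S j)) as [-> | Hlj].
    + pose proof (challenge_le adj Hconn _ _ _ _ _ Hround Hstep2). lia.
    + pose proof (challenge_drift adj Hconn _ _ _ _ _ _ Hround Hstep1 Hstep2).
      pose proof (IH ltac:(lia) ltac:(lia)).
      pose proof (dist_cnbr_l adj Hconn Hsym (us l) _ _ Hstep1).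
      pose proof (dist_cnbr_l adj Hconn Hsym (us l) _ _ Hstep2).
      lia.
Qed.

End Sweep.

Theorem lemma4p2 (L k : nat) (V : Type) (adj : V -> V -> Prop)
  (Hsym : forall u v, adj u v -> adj v u)
  (Hirr : forall u, ~ adj u u)
  (Hne : inhabited V)
  (Hconn : connected adj)
  (Hcover : exists us : nat -> V,
      forall v : V, exists j, j < L /\ dist adj (us j) v <= k) :
  can_localise adj (4 * L + k) (2 * L).
Proof.
  destruct Hcover as [us Hus].
  destruct L as [|L'].
  { destruct Hne as [v0]. destruct (Hus v0) as [j [Hj _]]. lia. }
  (* M_i is determined by the answers alone. *)
  exists (us 0), (us 0), (sweep us). intros m _.
  exists (2 * S L'). split; [lia |].
  exists (champion us (bit adj (us 0) (us 0) (sweep us) m) (S L')).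
  intros v [mt [Hv [Hstep Hbits]]].
  destruct (Hus v) as [l [Hl Hk]].
  pose proof (champion_near_centres adj us m (2 * S L') mt Hsym Hconn Hstep Hbits
                L' l ltac:(lia) ltac:(lia)) as Hnear.
  replace (2 * L' + 2) with (2 * S L') in Hnear by lia.
  rewrite Hv in Hnear. lia.
Qed.
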